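(* For every $n$, let $C_n\subseteq\mathcal C(G'')$ be a discrete (multi-)set of pointed perturbed diamonds with parameter $n$ (i.e. elements of the form $(D_n(x''),x'')$). Assume that for every $T<\infty$, $\lim_n |C_n\cap A_{n,T}|=0$. Then every subsequential limit of $(C_n)_n$ in $\mathcal C(G'')$ consists only of perturbed pointed horoballs of type II (possibly with infinite delay).
   Context: $G,G'$ are finitely generated groups with neutral elements $o,o'$, word metrics $d,d'$ from Cayley graphs with respect to finite generating sets, ball volumes $v_n,v'_n$, growth rates $a=\lim v_n^{1/n}>1$, $a'=\lim (v'_n)^{1/n}>1$, and $c:=\log a/\log a'$. $G''=G\times G'$ has origin $o''=(o,o')$ and metric $\rho_c((x,x'),(y,y'))=d(x,y)+d'(x',y')/c$. Fix a non-decreasing $f:\mathbb Z_{\ge0}\to\mathbb Z_{\ge0}$ and a strictly increasing sequence $(r_j)$ in $\mathbb Z_{\ge0}$ with $f(0)=0$, $r'_j:=f(r_j)$, $0<\inf_n v'_{r'_n}/v_{r_n}\le \sup_n v'_{r'_n}/v_{r_n}<\infty$ and $\forall m\,\exists N\,\forall n\ge N:|f(n+m)-f(n)-cm|\le1$. Perturbed diamond: $D_n(x''):=\bigcup_{t=0}^{r_n}\{(y,y'):d(x,y)=r_n-t,\ d'(x',y')\le f(t)\}$ for $x''=(x,x')$. Horocompactification $\overline{G''}$ of $(G'',\rho_c)$: with $\rho_{x''}(y'')=\rho_c(x'',y'')-\rho_c(x'',o'')$, the closure of $\{\rho_{x''}\}$ among $1$-Lipschitz functions vanishing at $o''$ under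 pointwise convergence; similarly $\overline G,\overline{G'}$ and boundaries $\partial G=\overline G\setminus G$, $\partial G'$. For $\theta\in\partial G$, $\theta'\in\partial G'$, $(\theta,\theta')\in\partial G''$ is the function $(y,y')\mapsto d_\theta(y)+d_{\theta'}(y')/c$. $\mathcal C(G'')$ is the space of pairs $(B,\theta)$ with $B\subseteq G''$ nonempty and $\theta\in\overline{G''}$, with the product of the Fell topology (pointwise convergence of indicators) and the topology of $\overline{G''}$; a discrete set in $\mathcal C(G'')$ is a multiset such that each $y''\in G''$ lies in $B$ for only finitely many of its elements $(B,\theta)$, and convergence of discrete sets is vague convergence of the associated counting measures. A pointed perturbed diamond is $(D_n(x''),x'')$. $A_{n,T}$ is the set of pointed perturbed diamonds with parameter $n$ whose center $(x,x')$ satisfies either ($d(o,x)<r_n+T$ and $d'(o',x')<T$) or ($d'(o',x')<r'_n+T$ and $d(o,x)<T$). A perturbed pointed horoball of type II is a pointed set $(B,\theta'')$ which is a limit in $\mathcal C(G'')$ of pointed perturbed diamonds $(D_{n_k}(x''_k),x''_k)$ (along parameters $n_k\to\infty$) with centers $x''_k=(x_k,x'_k)$ satisfying $d(x_k,o)\to\infty$ and $d'(x'_k,o')\to\infty$ (then $\theta''\in\partial G\times\partial G'$); additionally $(G'',\theta'')$ for any $\theta''\in\partial G\times\partial G'$ counts as a perturbed pointed horoball of type II with infinite delay. *)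

From mathcomp Require Import all_boot all_order all_algebra.
From mathcomp Require Import monoid.
From Stdlib Require List.
From mathcomp Require Import all_classical all_reals all_analysis.

Set Implicit Arguments.
Unset Strict Implicit.
Unset Printing Implicit Defensive.

Import Order.TTheory GRing.Theory Num.Theory.
Import numFieldNormedType.Exports.
Local Open Scope classical_set_scope.
Local Open Scope ring_scope.

Definition word_prod (G : groupType) (w : seq G) : G :=
  foldr (fun s acc => monoid.mul s acc) monoid.one w.

Definition word_in (G : groupType) (S : seq G) (w : seq G) : Prop :=
  forall s, List.In s w -> exists t, List.In t S /\ (s = t \/ s = monoid.inv t).

Definition is_word_metric (G : groupType) (S : seq G) (d : G -> G -> nat) : Prop :=
  forall x y n, (d x y <= n)%N <->
    exists w : seq G, (size w <= n)%N /\ word_in S w /\ y = monoid.mul x (word_prod w).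

Definition is_ball_volume (G : groupType) (d : G -> G -> nat) (v : nat -> nat) : Prop :=
  forall n : nat, ([set y | (d monoid.one y <= n)%N] #= `I_(v n))%card.

Definition growth_rate (R : realType) (v : nat -> nat) (a : R) : Prop :=
  (fun n : nat => ((v n)%:R : R) `^ (n%:R)^-1) @ \oo --> a.

Definition horo_fun (R : realType) (T : Type) (dist : T -> T -> R) (o x : T)
  : {ptws T -> R} := fun y => dist x y - dist x o.

Definition horo_compactification (R : realType) (T : Type) (dist : T -> T -> R) (o : T)
  : set {ptws T -> R} := closure (range (horo_fun dist o)).

Definition horo_boundary (R : realType) (T : Type) (dist : T -> T -> R) (o : T)
  : set {ptws T -> R} :=
  horo_compactification dist o `\` range (horo_fun dist o).

Definition rho_c (R : realType) (G G' : Type) (d : G -> G -> nat) (d' : G' -> G' -> nat)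
  (c : R) (p q : G * G') : R :=
  (d p.1 q.1)%:R + (d' p.2 q.2)%:R / c.

(* points of C(G''): (indicator of B, theta) with Fell (pointwise) topology
   times the pointwise topology on horofunctions *)
Definition Cpt (R : realType) (G G' : Type) : Type :=
  ({ptws (G * G')%type -> bool} * {ptws (G * G')%type -> R})%type.

Definition CG (R : realType) (G G' : groupType) (d : G -> G -> nat) (d' : G' -> G' -> nat)
  (c : R) : set (Cpt R G G') :=
  [set p : Cpt R G G' | (exists y, p.1 y) /\
           horo_compactification (rho_c d d' c) (monoid.one, monoid.one) p.2].

Definition in_diamond (G G' : Type) (d : G -> G -> nat) (d' : G' -> G' -> nat)
  (f : nat -> nat) (r : nat -> nat) (n : nat) (x y : G * G') : Prop :=
  exists t : nat, (t <= r n)%N /\ d x.1 y.1 = (r n - t)%N /\ (d' x.2 y.2 <= f t)%N.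

Definition pdiamond (R : realType) (G G' : groupType) (d : G -> G -> nat)
  (d' : G' -> G' -> nat) (c : R) (f r : nat -> nat) (n : nat) (x : G * G')
  : Cpt R G G' :=
  ((fun y => `[< in_diamond d d' f r n x y >]) : {ptws (G * G')%type -> bool},
   horo_fun (rho_c d d' c) (monoid.one, monoid.one) x).

(* A_{n,T}: pointed perturbed diamonds with parameter n and center close
   to one of the two "axes" *)
Definition A_set (R : realType) (G G' : groupType) (d : G -> G -> nat)
  (d' : G' -> G' -> nat) (c : R) (f r : nat -> nat) (n : nat) (T : R)
  : set (Cpt R G G') :=
  [set p : Cpt R G G' | exists x : G * G', p = pdiamond d d' c f r n x /\
     (((d monoid.one x.1)%:R < (r n)%:R + T /\ (d' monoid.one x.2)%:R < T) \/
      ((d' monoid.one x.2)%:R < (f (r n))%:R + T /\ (d monoid.one x.1)%:R < T))].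

Definition horoball_II (R : realType) (G G' : groupType) (d : G -> G -> nat)
  (d' : G' -> G' -> nat) (c : R) (f r : nat -> nat) (p : Cpt R G G') : Prop :=
  (CG d d' c p /\
   exists (nk : nat -> nat) (xk : nat -> (G * G')%type),
     (forall M : nat, \forall k \near \oo, (M <= nk k)%N) /\
     (forall M : nat, \forall k \near \oo, (M <= d (xk k).1 monoid.one)%N) /\
     (forall M : nat, \forall k \near \oo, (M <= d' (xk k).2 monoid.one)%N) /\
     (fun k => pdiamond d d' c f r (nk k) (xk k)) @ \oo --> p)
  \/
  (p.1 = (fun _ => true) /\
   exists (th : {ptws G -> R}) (th' : {ptws G' -> R}),
     horo_boundary (fun x y => (d x y)%:R) monoid.one th /\
     horo_boundary (fun x y => (d' x y)%:R) monoid.one th' /\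
     p.2 = (fun y => th y.1 + th' y.2 / c)).

(* a multiset is given by its multiplicity function m *)
Definition discrete_set (R : realType) (G G' : groupType) (d : G -> G -> nat)
  (d' : G' -> G' -> nat) (c : R) (m : Cpt R G G' -> nat) : Prop :=
  (forall p, (m p != 0)%N -> CG d d' c p) /\
  (forall y : G * G', finite_set [set p : Cpt R G G' | (m p != 0)%N /\ p.1 y]).

Definition count_integral (R : realType) (G G' : Type)
  (m : Cpt R G G' -> nat) (phi : Cpt R G G' -> R) : R :=
  \sum_(p \in [set p : Cpt R G G' | (m p != 0)%N]) (m p)%:R * phi p.

Definition Cc_fun (R : realType) (G G' : groupType) (d : G -> G -> nat)
  (d' : G' -> G' -> nat) (c : R) (phi : Cpt R G G' -> R) : Prop :=
  {within CG d d' c, continuous phi} /\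
  exists K : set (Cpt R G G'), K `<=` CG d d' c /\ compact K /\
    (forall p, CG d d' c p -> ~ K p -> phi p = 0).

Definition vague_cvg (R : realType) (G G' : groupType) (d : G -> G -> nat)
  (d' : G' -> G' -> nat) (c : R) (ms : nat -> Cpt R G G' -> nat)
  (m : Cpt R G G' -> nat) : Prop :=
  forall phi, Cc_fun d d' c phi ->
    (fun k => count_integral (ms k) phi) @ \oo --> count_integral m phi.

(* Fix p charged by the limit Cl and a point y0 of its set. For each j, test
   Cl against the continuous compactly supported function that is positive at
   p and vanishes unless a point agrees with p in its set on the j-ball around
   o and is 1/(j+1)-close to p in its horofunction there. Vague convergence
   makes its integral against C (nk k) positive for large k, while C (nk k)
   eventually does not charge A_{nk k, j}: some charged pointed diamond close
   to p lies outside A_{nk k, j}. Its diamond contains y0, so its centre is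
   within r n + O(1) of o in G and within f (r n) + O(1) in G'; avoiding
   A_{nk k, j} then forces both coordinates of the centre to distance at
   least j from o. These diamonds converge to p as j grows. *)

From mathcomp Require Import all_boot all_order all_algebra.
From mathcomp Require Import monoid.
From mathcomp Require Import all_classical all_reals all_analysis.
From mathcomp Require Import lra zify.
Import Order.TTheory GRing.Theory Num.Theory.
Import numFieldNormedType.Exports.
Local Open Scope classical_set_scope.
Local Open Scope ring_scope.
Set Implicit Arguments.
Unset Strict Implicit.
Unset Printing Implicit Defensive.

Section WordMetric.
Variables (G : groupType) (S : seq G) (d : G -> G -> nat).
Hypothesis Hd : is_word_metric S d.

Lemma word_prod_cat (w1 w2 : seq G) :
  word_prod (w1 ++ w2) = monoid.mul (word_prod w1) (word_prod w2).
Proof. by elim: w1 => [|s w IH] /=; rewrite ?mul1g // IH mulgA. Qed.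

Lemma word_in_cat w1 w2 : word_in S w1 -> word_in S w2 -> word_in S (w1 ++ w2).
Proof. by move=> h1 h2 s /List.in_app_iff [] ?; [exact: h1|exact: h2]. Qed.

Lemma word_prod_inv w : word_in S w -> exists w', [/\ size w' = size w,
  word_in S w' & word_prod w' = monoid.inv (word_prod w)].
Proof.
elim: w => [|s w IH] hw /=.
  by exists [::]; split => //; rewrite /= invg1.
have [|w' [e1 i1 p1]] := IH; first by move=> t ht; apply: hw; right.
exists (w' ++ [:: monoid.inv s]); split; first by rewrite size_cat e1 addn1.
  apply: word_in_cat => // t [<-|[]].
  have [u [hu [->|->]]] := hw s (or_introl erefl); exists u; split => //.
    by right.
  by left; rewrite invgK.
by rewrite word_prod_cat p1 /= mulg1 invgM.
Qed.

Lemma word_metric_triangle x y z : (d x z <= d x y + d y z)%N.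
Proof.
have [w1 [s1 [i1 e1]]] := (Hd x y (d x y)).1 (leqnn _).
have [w2 [s2 [i2 e2]]] := (Hd y z (d y z)).1 (leqnn _).
apply/Hd; exists (w1 ++ w2); split; first by rewrite size_cat leq_add.
split; first exact: word_in_cat.
by rewrite word_prod_cat mulgA -e1.
Qed.

Lemma word_metric_sym x y : d x y = d y x.
Proof.
suff H u w : (d w u <= d u w)%N by apply/eqP; rewrite eqn_leq !H.
have [w1 [s1 [i1 e1]]] := (Hd u w (d u w)).1 (leqnn _).
have [w' [s' i' p']] := word_prod_inv i1.
by subst w; apply/Hd; exists w'; rewrite s' p' mulgK.
Qed.

Lemma ball_finite (v : nat -> nat) : is_ball_volume d v ->
  forall n, finite_set [set y | (d monoid.one y <= n)%N].
Proof. by move=> Hv n; apply/finite_setP; exists (v n); apply: Hv. Qed.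

End WordMetric.

Lemma cvg_ptws (I : Type) (V : topologicalType) (F : set_system {ptws I -> V})
  (f : {ptws I -> V}) {FF : Filter F} :
  (forall i, (fun g => g i) @ F --> f i) -> F --> f.
Proof.
move=> H; apply/cvg_sup => i; apply/cvg_image => //.
  by apply/seteqP; split => // v _; exists (fun=> v).
move=> A /H FA; exists [set g : {ptws I -> V} | A (g i)] => //.
by apply/seteqP; split => [v [g Ag <-]//|v Av]; exists (fun=> v).
Qed.

Lemma bool_continuous (T : topologicalType) (h : bool -> T) : continuous h.
Proof.
move=> b A /= hA; apply: (filterS _ (discrete_set1 b)) => x /= ->.
exact: nbhs_singleton.
Qed.

Lemma continuous_prod (R : realType) (T : topologicalType) (fs : seq (T -> R)) :
  (forall f, f \in fs -> continuous f) ->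
  continuous (fun q => \prod_(f <- fs) f q).
Proof.
elim: fs => [|f fs IH] H q.
  by under eq_fun do rewrite big_nil; exact: cvg_cst.
under eq_fun do rewrite big_cons.
apply: (continuousM (s := f) (t := fun q => \prod_(f <- fs) f q)).
  by apply: H; rewrite mem_head.
by apply: IH => g gin; apply: H; rewrite in_cons gin orbT.
Qed.

Lemma fsumr_ge_term (R : realType) (I : choiceType) (P : set I) (F : I -> R) i :
  finite_set (P `&` F @^-1` [set~ 0]) -> (forall j, P j -> 0 <= F j) -> P i ->
  F i <= \sum_(j \in P) F j.
Proof.
move=> fin ge0 Pi; have [->|Fi0] := eqVneq (F i) 0; first exact: fsumr_ge0.
rewrite fsbig_supp (fsbigD1 i) //; last by split => //=; apply/eqP.
by rewrite lerDl fsumr_ge0 // => j [[Pj _] _]; exact: ge0.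
Qed.

Lemma ltn_homo_geq_id (g : nat -> nat) :
  {homo g : m n / (m < n)%N} -> forall k, (k <= g k)%N.
Proof. by move=> hg; elim => [|k IH] //; apply: leq_ltn_trans IH _; exact: hg. Qed.

Lemma near_ltn_homo (P : nat -> Prop) (g : nat -> nat) :
  {homo g : m n / (m < n)%N} ->
  (\forall n \near \oo, P n) -> \forall k \near \oo, P (g k).
Proof.
move=> /ltn_homo_geq_id hg [N _ HN]; exists N => // k /= Nk.
by apply: HN; exact: leq_trans Nk (hg k).
Qed.

Lemma ptws_agree_compact (X : eqType) (s : seq X) (b : X -> bool) :
  compact [set B : {ptws X -> bool} | forall z, z \in s -> B z = b z].
Proof.
have := @tychonoff X (fun _ => bool)
  (fun z => if z \in s then [set b z] else [set: bool]) _.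
have -> : [set g : X -> bool | forall z,
    (if z \in s then [set b z] else [set: bool]) (g z)] =
  [set B : {ptws X -> bool} | forall z, z \in s -> B z = b z].
  apply/seteqP; split => g /= H z; first by move=> zs; have := H z; rewrite zs.
  by case: ifP => // zs; apply: H.
by apply => z; case: ifP => _; [exact: compact_set1|exact: bool_compact].
Qed.

Section PointwiseBox.
Variables (R : realType) (X : eqType).

Lemma ptws_box_compact (m : X -> R) :
  compact [set h : {ptws X -> R} | forall z, `[- m z, m z]%classic (h z)].
Proof.
exact: (@tychonoff X (fun _ => R) (fun z => `[- m z, m z]%classic)
  (fun z => @segment_compact R _ _)).
Qed.

Lemma ptws_box_closed (m : X -> R) :
  closed [set h : {ptws X -> R} | forall z, `[- m z, m z]%classic (h z)].
Proof.
apply: compact_closed; last exact: ptws_box_compact.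
by apply: hausdorff_product => _; exact: Rhausdorff.
Qed.

End PointwiseBox.

Section ProductMetric.
Variables (R : realType) (G G' : groupType) (S : seq G) (S' : seq G').
Variables (d : G -> G -> nat) (d' : G' -> G' -> nat).
Hypotheses (Hd : is_word_metric S d) (Hd' : is_word_metric S' d').
Variable c : R.
Hypothesis c_gt0 : 0 < c.
Local Notation X := (G * G')%type.
Local Notation rho := (rho_c d d' c).
Local Notation o := ((monoid.one, monoid.one) : X).

Lemma rho_c_sym x y : rho x y = rho y x.
Proof. by rewrite /rho_c (word_metric_sym Hd) (word_metric_sym Hd'). Qed.

Lemma rho_c_triangle x y z : rho x z <= rho x y + rho y z.
Proof.
rewrite /rho_c addrACA lerD //.
  by rewrite -natrD ler_nat (word_metric_triangle Hd).
by rewrite -mulrDl ler_pM2r ?invr_gt0 // -natrD ler_nat (word_metric_triangle Hd').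
Qed.

Lemma horo_fun_bound x z : `|horo_fun rho o x z| <= rho o z.
Proof.
have := rho_c_triangle x z o; have := rho_c_triangle x o z.
rewrite (rho_c_sym z o) /horo_fun ler_norml => h1 h2; apply/andP; split; lra.
Qed.

Lemma horo_compactification_compact : compact (horo_compactification rho o).
Proof.
pose box := [set h : {ptws X -> R} | forall z, `[- rho o z, rho o z]%classic (h z)].
have box_closed : closed box by exact: ptws_box_closed.
apply: (@subclosed_compact _ _ box); [exact: closed_closure|exact: ptws_box_compact|].
rewrite /horo_compactification [X in _ `<=` X](closure_id _).1 //.
apply: closureS => _ [x _ <-] z /=.
by rewrite in_itv /= -ler_norml horo_fun_bound.
Qed.

End ProductMetric.

Section TestFunction.
Variables (R : realType) (G G' : groupType).
Local Notation X := (G * G')%type.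

Definition tent (eps a t : R) : R := Num.max 0 (1 - `|t - a| / eps).

Definition window (p : Cpt R G G') (eps : R) (z : X) (q : Cpt R G G') : R :=
  (if q.1 z == p.1 z then 1 else 0) * tent eps (p.2 z) (q.2 z).

Definition test_fun (p : Cpt R G G') (s : seq X) (eps : R) (q : Cpt R G G') : R :=
  \prod_(z <- s) window p eps z q.

Variables (p : Cpt R G G') (s : seq X) (eps : R).

Lemma tent_continuous a : continuous (tent eps a).
Proof.
move=> t; apply: (@continuous_max R R^o (fun=> 0) (fun t => 1 - `|t - a| / eps)).
  exact: cvg_cst.
apply: continuousB; first exact: cvg_cst.
apply: continuousM; last exact: cvg_cst.
apply: (@continuous_comp _ _ _ (fun t => t - a) Num.norm); last exact: norm_continuous.
by apply: continuousB; [exact: cvg_id|exact: cvg_cst].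
Qed.

Lemma window_continuous z : continuous (window p eps z).
Proof.
move=> q; apply: (continuousM
  (s := fun q : Cpt R G G' => if q.1 z == p.1 z then 1 else 0)
  (t := fun q : Cpt R G G' => tent eps (p.2 z) (q.2 z))).
  apply: (@continuous_comp _ _ _ (fun q : Cpt R G G' => q.1 z)
    (fun b : bool => if b == p.1 z then 1 else 0 : R)); last first.
    exact: bool_continuous.
  apply: (@continuous_comp _ _ _ fst (fun g : {ptws X -> bool} => g z)).
    exact: cvg_fst.
  exact: proj_continuous.
apply: (@continuous_comp _ _ _ (fun q : Cpt R G G' => q.2 z)); last first.
  exact: tent_continuous.
apply: (@continuous_comp _ _ _ snd (fun g : {ptws X -> R} => g z)).
  exact: cvg_snd.
exact: proj_continuous.
Qed.

Lemma test_fun_continuous : continuous (test_fun p s eps).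
Proof.
have -> : test_fun p s eps = fun q => \prod_(g <- map (window p eps) s) g q.
  by apply: funext => q; rewrite /test_fun big_map.
by apply: continuous_prod => g /mapP [z _ ->]; exact: window_continuous.
Qed.

Hypothesis eps_gt0 : 0 < eps.

Lemma test_fun_ge0 q : 0 <= test_fun p s eps q.
Proof.
rewrite prodr_ge0 // => z _.
by rewrite mulr_ge0 ?le_max ?lexx //; case: ifP.
Qed.

Lemma test_fun_center : test_fun p s eps p = 1.
Proof.
rewrite /test_fun big1_seq // => z _.
by rewrite /window eqxx mul1r /tent subrr normr0 mul0r subr0 max_r ?ler01.
Qed.

Lemma test_fun_neq0 q : test_fun p s eps q != 0 ->
  forall z, z \in s -> q.1 z = p.1 z /\ `|q.2 z - p.2 z| < eps.
Proof.
move=> H z zs; have : window p eps z q != 0.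
  apply: contraNneq H => g0.
  by apply/eqP; rewrite /test_fun (big_rem z zs) /= g0 mul0r.
rewrite /window; have [-> /=|_] := eqVneq (q.1 z) (p.1 z); last first.
  by rewrite mul0r eqxx.
rewrite mul1r /tent; case: (ltP 0 (1 - `|q.2 z - p.2 z| / eps)); last first.
  by rewrite eqxx.
by rewrite subr_gt0 ltr_pdivrMr // mul1r.
Qed.

Lemma test_fun_Cc (S : seq G) (S' : seq G') (d : G -> G -> nat)
    (d' : G' -> G' -> nat) (c : R) :
  is_word_metric S d -> is_word_metric S' d' -> 0 < c ->
  (exists2 y0, y0 \in s & p.1 y0) -> Cc_fun d d' c (test_fun p s eps).
Proof.
move=> Hd Hd' c_gt0 [y0 y0s py0].
split; first exact/continuous_subspaceT/test_fun_continuous.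
exists [set q : Cpt R G G' | (forall z, z \in s -> q.1 z = p.1 z) /\
   horo_compactification (rho_c d d' c) (monoid.one, monoid.one) q.2].
split; first by move=> q [H1 H2]; split => //; exists y0; rewrite H1.
split.
  by have := compact_setX (ptws_agree_compact (s := s) (b := p.1))
    (horo_compactification_compact Hd Hd' c_gt0).
move=> q [_ H2] nK; apply/eqP; apply: contra_notT nK => /test_fun_neq0 H.
by split => // z zs; exact: (H z zs).1.
Qed.

End TestFunction.

Section CountIntegral.
Variables (R : realType) (G G' : groupType).
Implicit Types (m : Cpt R G G' -> nat) (ph : Cpt R G G' -> R).

Lemma count_integral_gt0 m ph p (y0 : G * G') :
  finite_set [set q : Cpt R G G' | (m q != 0)%N /\ q.1 y0] ->
  (forall q, 0 <= ph q) -> (forall q, ph q != 0 -> q.1 y0) ->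
  (m p != 0)%N -> 0 < ph p -> 0 < count_integral m ph.
Proof.
move=> fin ge0 supp mp php.
apply: (@lt_le_trans _ _ ((m p)%:R * ph p)); first by rewrite mulr_gt0 // ltr0n lt0n.
apply: (@fsumr_ge_term R _ [set q | (m q != 0)%N] (fun q => (m q)%:R * ph q)) => //.
- apply: sub_finite_set fin => q [/= mq /eqP].
  by rewrite mulf_eq0 negb_or => /andP[_ /supp].
- by move=> q _; rewrite mulr_ge0.
Qed.

Lemma count_integral_neq0 m ph :
  count_integral m ph != 0 -> exists q, (m q != 0)%N /\ ph q != 0.
Proof.
move=> H; apply: contra_notP (negP H) => Hn; apply/eqP.
rewrite /count_integral fsbig1 // => q /= mq.
have [->|pq] := eqVneq (ph q) 0; first by rewrite mulr0.
by exfalso; apply: Hn; exists q.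
Qed.

End CountIntegral.

Section Diamonds.
Variables (R : realType) (G G' : groupType) (S : seq G) (S' : seq G').
Variables (d : G -> G -> nat) (d' : G' -> G' -> nat).
Variables (c : R) (f r : nat -> nat).

Lemma A_set_finite (v v' : nat -> nat) n (j : nat) :
  is_ball_volume d v -> is_ball_volume d' v' ->
  finite_set (A_set d d' c f r n j%:R).
Proof.
move=> Hv Hv'; pose N := (r n + f (r n) + j)%N.
apply: (@sub_finite_set _ _ (pdiamond d d' c f r n @`
   ([set y | (d monoid.one y <= N)%N] `*` [set y | (d' monoid.one y <= N)%N]))).
  move=> q [x [-> H]]; exists x => //; split => /=;
  case: H; rewrite -?natrD ?ltr_nat => -[h1 h2]; rewrite /N; lia.
by apply/finite_image/finite_setX; exact: ball_finite.
Qed.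

Lemma A_set_uncharged (v v' : nat -> nat) (m : Cpt R G G' -> nat) n (j : nat) :
  is_ball_volume d v -> is_ball_volume d' v' ->
  \sum_(q \in A_set d d' c f r n j%:R) ((m q)%:R : R) < 1 ->
  forall q, (m q != 0)%N -> ~ A_set d d' c f r n j%:R q.
Proof.
move=> Hv Hv' Hs q mq Aq.
suff : ((m q)%:R : R) < 1 by rewrite ltrn1; lia.
apply: le_lt_trans Hs.
apply: (@fsumr_ge_term R _ _ (fun q => ((m q)%:R : R))) => //.
by apply: sub_finite_set (A_set_finite n j Hv Hv') => ? [].
Qed.

Hypotheses (Hd : is_word_metric S d) (Hd' : is_word_metric S' d').
Hypothesis f_homo : {homo f : m n / (m <= n)%N}.

Lemma diamond_center_far n (j : nat) (x y : G * G') :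
  in_diamond d d' f r n x y -> ~ A_set d d' c f r n j%:R (pdiamond d d' c f r n x) ->
  (d monoid.one y.1 < j)%N -> (d' monoid.one y.2 < j)%N ->
  (j <= d monoid.one x.1)%N /\ (j <= d' monoid.one x.2)%N.
Proof.
move=> [t [tr [e1 e2]]] nA y1j y2j.
have ft := f_homo tr.
have t1 := word_metric_triangle Hd monoid.one y.1 x.1.
have t2 := word_metric_triangle Hd' monoid.one y.2 x.2.
rewrite (word_metric_sym Hd y.1) e1 in t1; rewrite (word_metric_sym Hd' y.2) in t2.
have {}nA : ~ (((d monoid.one x.1 < r n + j)%N /\ (d' monoid.one x.2 < j)%N) \/
               ((d' monoid.one x.2 < f (r n) + j)%N /\ (d monoid.one x.1 < j)%N)).
  by move=> H; apply: nA; exists x; rewrite -!natrD !ltr_nat.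
lia.
Qed.

End Diamonds.

Section VagueLimit.
Variables (R : realType) (G G' : groupType) (S : seq G) (S' : seq G').
Variables (d : G -> G -> nat) (d' : G' -> G' -> nat).
Hypotheses (Hd : is_word_metric S d) (Hd' : is_word_metric S' d').
Variables (v v' : nat -> nat).
Hypotheses (Hv : is_ball_volume d v) (Hv' : is_ball_volume d' v').
Variables (c : R) (f r : nat -> nat).
Hypotheses (c_gt0 : 0 < c) (f_homo : {homo f : m n / (m <= n)%N}).
Variable C : nat -> Cpt R G G' -> nat.
Hypothesis C_diamond :
  forall n q, (C n q != 0)%N -> exists x, q = pdiamond d d' c f r n x.
Hypothesis C_A_vanish : forall T : R,
  (fun n => \sum_(q \in A_set d d' c f r n T) ((C n q)%:R : R)) @ \oo --> 0.
Variables (nk : nat -> nat) (Cl : Cpt R G G' -> nat).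
Hypotheses (nk_homo : {homo nk : m n / (m < n)%N})
  (Cl_discrete : discrete_set d d' c Cl)
  (C_vague : vague_cvg d d' c (fun k => C (nk k)) Cl).
Variables (p : Cpt R G G') (y0 : G * G').
Hypotheses (Cl_p : (Cl p != 0)%N) (p_y0 : p.1 y0).
Local Notation X := (G * G')%type.
Local Notation diamond n x := (pdiamond d d' c f r n x).

Definition probe (j : nat) : seq X := y0 :: finmap.enum_fset (fset_set
  [set z : X | (d monoid.one z.1 <= j)%N /\ (d' monoid.one z.2 <= j)%N]).

Definition probe_test (j : nat) : Cpt R G G' -> R :=
  test_fun p (probe j) j.+1%:R^-1.

Lemma probe_eventually z : \forall j \near \oo, z \in probe j.
Proof.
exists (maxn (d monoid.one z.1) (d' monoid.one z.2)) => // j /=.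
rewrite geq_max => /andP[h1 h2].
rewrite in_cons in_fset_set; last first.
  exact: finite_setX (ball_finite Hv j) (ball_finite Hv' j).
by apply/orP; right; rewrite inE.
Qed.

Lemma probe_test_y0 j q : probe_test j q != 0 -> q.1 y0.
Proof. by move/test_fun_neq0 => /(_ _ y0 (mem_head _ _)) [|->]. Qed.

Lemma charged_diamond_near j : exists k x, [/\ (j <= k)%N,
  probe_test j (diamond (nk k) x) != 0 &
  ~ A_set d d' c f r (nk k) j%:R (diamond (nk k) x)].
Proof.
have pos : 0 < count_integral Cl (probe_test j).
  apply: (@count_integral_gt0 R G G' Cl _ p y0 (Cl_discrete.2 y0)) => //.
  - by move=> q; apply: test_fun_ge0.
  - by move=> q; apply: probe_test_y0.
  - by rewrite /probe_test test_fun_center.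
have Cc : Cc_fun d d' c (probe_test j).
  by apply: (test_fun_Cc _ Hd Hd' c_gt0) => //; exists y0; rewrite ?mem_head.
have ev_pos : \forall k \near \oo, 0 < count_integral (C (nk k)) (probe_test j).
  by move: pos; apply: cvgr_gt; exact: C_vague.
have ev_A : \forall k \near \oo,
    \sum_(q \in A_set d d' c f r (nk k) j%:R) ((C (nk k) q)%:R : R) < 1.
  apply: (near_ltn_homo (P := fun n =>
    \sum_(q \in A_set d d' c f r n j%:R) ((C n q)%:R : R) < 1) nk_homo).
  by move: (@ltr01 R); apply: cvgr_lt.
have [k [[/lt0r_neq0 /count_integral_neq0 [q [Cq phq]] hA] jk]] :=
  filter_ex (filterI (filterI ev_pos ev_A) (nbhs_infty_ge j)).
have [x ex] := C_diamond Cq; subst q.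
by exists k, x; split => //; exact: A_set_uncharged Hv Hv' hA _ Cq.
Qed.

Lemma vague_limit_diamond_limit : exists (nj : nat -> nat) (xj : nat -> X),
  [/\ forall M : nat, \forall j \near \oo, (M <= nj j)%N,
      forall M : nat, \forall j \near \oo, (M <= d (xj j).1 monoid.one)%N,
      forall M : nat, \forall j \near \oo, (M <= d' (xj j).2 monoid.one)%N &
      (fun j => diamond (nj j) (xj j)) @ \oo --> p].
Proof.
have [kx Hkx] := choice charged_diamond_near.
have [xj {}Hkx] := choice Hkx.
pose q j := diamond (nk (kx j)) (xj j).
have q_close j z : z \in probe j ->
    (q j).1 z = p.1 z /\ `|(q j).2 z - p.2 z| < j.+1%:R^-1.
  by case: (Hkx j) => _ H _; apply: (test_fun_neq0 _ H).
pose D0 := maxn (d monoid.one y0.1) (d' monoid.one y0.2).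
have far j : (D0 < j)%N ->
    (j <= d monoid.one (xj j).1)%N /\ (j <= d' monoid.one (xj j).2)%N.
  move=> D0j; case: (Hkx j) => _ /probe_test_y0 /asboolP diam nA.
  by apply: (diamond_center_far Hd Hd' f_homo diam nA); rewrite /D0 in D0j; lia.
exists (fun j => nk (kx j)), xj; split.
- move=> M; exists M => // j /= Mj; case: (Hkx j) => jk _ _.
  exact: leq_trans Mj (leq_trans jk (ltn_homo_geq_id nk_homo _)).
- move=> M; exists (maxn M D0).+1 => // j /=; rewrite gtn_max => /andP[h1 h2].
  by rewrite (word_metric_sym Hd); have [] := far j; lia.
- move=> M; exists (maxn M D0).+1 => // j /=; rewrite gtn_max => /andP[h1 h2].
  by rewrite (word_metric_sym Hd'); have [] := far j; lia.
have cvg1 : (fun j => (q j).1) @ \oo --> p.1.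
  apply: cvg_ptws => z; apply: cvg_near_cst.
  by apply: filterS (probe_eventually z) => j /q_close [].
have cvg2 : (fun j => (q j).2) @ \oo --> p.2.
  apply: cvg_ptws => z; apply/(@cvgrPdist_lt _ R^o) => e e0.
  apply: filterS (filterI (near_infty_natSinv_lt (PosNum e0)) (probe_eventually z)).
  by move=> j [h1 /q_close [_ h2]] /=; rewrite distrC; apply: lt_trans h2 h1.
exact: cvg_pair cvg1 cvg2.
Qed.

End VagueLimit.

Theorem lemma3p5
  (R : realType) (G G' : groupType)
  (S : seq G) (S' : seq G')
  (d : G -> G -> nat) (d' : G' -> G' -> nat)
  (Hd : is_word_metric S d) (Hd' : is_word_metric S' d')
  (v v' : nat -> nat)
  (Hv : is_ball_volume d v) (Hv' : is_ball_volume d' v')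
  (a a' : R)
  (Ha : growth_rate v a) (Ha' : growth_rate v' a')
  (Ha1 : 1 < a) (Ha1' : 1 < a')
  (c : R) (Hc : c = ln a / ln a')
  (f : nat -> nat) (Hfmono : {homo f : m n / (m <= n)%N}) (Hf0 : f 0%N = 0%N)
  (r : nat -> nat) (Hr : {homo r : m n / (m < n)%N})
  (Hratio : exists k1 k2 : R, 0 < k1 /\
      forall n : nat, k1 <= (v' (f (r n)))%:R / (v (r n))%:R <= k2)
  (Hfc : forall m : nat, exists N : nat, forall n : nat, (N <= n)%N ->
      `|(f (n + m)%N)%:R - (f n)%:R - c * m%:R| <= 1)
  (C : nat -> Cpt R G G' -> nat)
  (HCdisc : forall n, discrete_set d d' c (C n))
  (HCdiam : forall n p, (C n p != 0)%N -> exists x : G * G', p = pdiamond d d' c f r n x)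
  (HA : forall T : R,
      (fun n => \sum_(p \in A_set d d' c f r n T) ((C n p)%:R : R)) @ \oo --> 0) :
  forall (nk : nat -> nat) (Cl : Cpt R G G' -> nat),
    {homo nk : m n / (m < n)%N} ->
    discrete_set d d' c Cl ->
    vague_cvg d d' c (fun k => C (nk k)) Cl ->
    forall p, (Cl p != 0)%N -> horoball_II d d' c f r p.
Proof.
move=> nk Cl Hnk HCl Hvague p Clp.
have c_gt0 : 0 < c by rewrite Hc divr_gt0 // ln_gt0.
have CGp : CG d d' c p := HCl.1 p Clp.
have [y0 py0] := CGp.1.
left; split => //.
have [nj [xj [H1 H2 H3 H4]]] := vague_limit_diamond_limit Hd Hd' Hv Hv' c_gt0
  Hfmono HCdiam HA Hnk HCl Hvague Clp py0.
by exists nj, xj.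
Qed.
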